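(* Let $q\ge 2$, $n\ge 1$ and $d_Z\ge 1$ be integers, and let ${\bf c}_1,\dots,{\bf c}_m$ be distinct strings in $\{0,1,\dots,q-1\}^n$. Let $A$ be the real matrix with $m$ columns (indexed by $k=1,\dots,m$) whose rows are: one row with all entries equal to $1$; and, for every ${\bf z}\in\{0,\dots,q-1\}^n$ with $1\le \mathrm{wt}({\bf z})\le d_Z-1$, two rows $({\bf z},0)$ and $({\bf z},1)$ with entries $A_{({\bf z},0),k}=\mathrm{Re}\,\langle {\bf c}_k|Z^{\bf z}|{\bf c}_k\rangle=\cos(2\pi\,{\bf z}^T{\bf c}_k/q)$ and $A_{({\bf z},1),k}=\mathrm{Im}\,\langle {\bf c}_k|Z^{\bf z}|{\bf c}_k\rangle=\sin(2\pi\,{\bf z}^T{\bf c}_k/q)$. Let ${\bf x}=(x_1,\dots,x_m)^T$ be a nonzero real vector with $A{\bf x}=0$, and define $x_k^+=\max\{x_k,0\}$, $x_k^-=\max\{-x_k,0\}$, $x=\sum_{k=1}^m x_k^+$, and $$|0_L\rangle=\frac{1}{\sqrt{x}}\sum_{k=1}^m\sqrt{x_k^+}\,|{\bf c}_k\rangle,\qquad |1_L\rangle=\frac{1}{\sqrt{x}}\sum_{k=1}^m\sqrt{x_k^-}\,|{\bf c}_k\rangle.$$ Then $\langle 0_L|P|0_L\rangle=\langle 1_L|P|1_L\rangle$ for every diagonal Pauli operator $P=Z^{\bf z}$ with $\mathrm{wt}({\bf z})\le d_Z-1$.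
   Context: Let $\omega=e^{2\pi i/q}$. On $\mathbb{C}^q$ with orthonormal basis $|0\rangle,\dots,|q-1\rangle$, define the generalized Pauli matrices $Z=\sum_{j=0}^{q-1}\omega^j|j\rangle\langle j|$ and $X=\sum_{j\in\mathbb{Z}_q}|j\rangle\langle j+1|$ (indices mod $q$). For ${\bf z}=(z_1,\dots,z_n)$, $Z^{\bf z}=Z^{z_1}\otimes\cdots\otimes Z^{z_n}$ is the diagonal Pauli operator of weight $\mathrm{wt}({\bf z})$, the Hamming weight (number of nonzero entries). For a string ${\bf c}=(c_1,\dots,c_n)$, $|{\bf c}\rangle=|c_1\rangle\otimes\cdots\otimes|c_n\rangle$, and ${\bf z}^T{\bf c}=\sum_i z_ic_i$. *)

From HB Require Import structures.
From mathcomp Require Import all_boot all_order all_algebra.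
From mathcomp Require Import complex.
From mathcomp Require Import reals trigo.
Set Implicit Arguments. Unset Strict Implicit. Unset Printing Implicit Defensive.
Import Order.TTheory GRing.Theory Num.Theory.
Local Open Scope ring_scope.
Local Open Scope complex_scope.

Definition qstring (q n : nat) := {ffun 'I_n -> 'I_q}.

Definition wt (q n : nat) (z : qstring q n) : nat := #|[set i | val (z i) != 0%N]|.

Definition zdot (q n : nat) (z c : qstring q n) : nat := (\sum_(i < n) val (z i) * val (c i))%N.

Definition omega (R : realType) (q : nat) : R[i] :=
  (cos (2 * pi / q%:R) +i* sin (2 * pi / q%:R))%C.

(* Z^z |s> = (prod_i omega^(z_i s_i)) |s> : eigenvalue of the diagonal Pauli Z^z on |s> *)
Definition Zeig (R : realType) (q n : nat) (z s : qstring q n) : R[i] :=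
  \prod_(i < n) omega R q ^+ (val (z i) * val (s i)).

(* <psi| Z^z |psi> for a state psi given by its amplitudes in the computational basis *)
Definition expect (R : realType) (q n : nat) (psi : qstring q n -> R[i]) (z : qstring q n) : R[i] :=
  \sum_(s : qstring q n) (psi s)^* * Zeig R z s * psi s.

(* row index set of A, besides the all-ones row: (z, b) with 1 <= wt z <= dZ - 1 *)
Definition zrange (q n dZ : nat) := {z : qstring q n | (1 <= wt z <= dZ - 1)%N}.
Definition Arow (q n dZ : nat) := option (zrange q n dZ * bool).

Definition Aentry (R : realType) (q n dZ m : nat) (c : 'I_m -> qstring q n)
    (r : Arow q n dZ) (k : 'I_m) : R :=
  match r with
  | None => 1
  | Some (z, false) => cos (2 * pi * (zdot (val z) (c k))%:R / q%:R)
  | Some (z, true) => sin (2 * pi * (zdot (val z) (c k))%:R / q%:R)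
  end.

Definition Amat (R : realType) (q n dZ m : nat) (c : 'I_m -> qstring q n) :
    'M[R]_(#|{: Arow q n dZ}|, m) :=
  \matrix_(i, k) Aentry R c (enum_val i) k.

Definition xplus (R : realType) (m : nat) (x : 'cV[R]_m) (k : 'I_m) : R := Num.max (x k 0) 0.
Definition xminus (R : realType) (m : nat) (x : 'cV[R]_m) (k : 'I_m) : R := Num.max (- x k 0) 0.

Definition logical_state (R : realType) (q n m : nat) (c : 'I_m -> qstring q n)
    (w : 'I_m -> R) (xtot : R) (s : qstring q n) : R[i] :=
  \sum_(k < m) if c k == s then ((Num.sqrt (w k) / Num.sqrt xtot)%:C)%C else 0.

From HB Require Import structures.
From mathcomp Require Import all_boot all_order all_algebra.
From mathcomp Require Import complex.
From mathcomp Require Import reals trigo ring.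
Import Order.TTheory GRing.Theory Num.Theory.
Local Open Scope ring_scope.
Local Open Scope complex_scope.

(** Since the strings [c_k] are distinct, [<0_L|Z^z|0_L> - <1_L|Z^z|1_L>] equals
    [x^-1 \sum_k (x_k^+ - x_k^-) <c_k|Z^z|c_k> = x^-1 \sum_k x_k <c_k|Z^z|c_k>].
    The real and imaginary parts of this sum are entries of [A x] (the all-ones
    row when [z = 0], the rows [(z, 0)] and [(z, 1)] otherwise), so it vanishes. *)

Lemma max0_subN (R : realDomainType) (a : R) : Num.max a 0 - Num.max (- a) 0 = a.
Proof.
rewrite !maxEge oppr_ge0.
have [a_ge0 | a_lt0] := lerP 0 a; last by rewrite ltW //= sub0r opprK.
have [a_le0 | _] := lerP a 0; last by rewrite subr0.
have -> : a = 0 by apply/le_anti; rewrite a_le0 a_ge0.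
by rewrite oppr0 subr0.
Qed.

Lemma xplus_sub_xminus {R : realType} {m : nat} (x : 'cV[R]_m) (k : 'I_m) :
  xplus x k - xminus x k = x k 0.
Proof. exact: max0_subN. Qed.

Lemma xplus_ge0 {R : realType} {m : nat} (x : 'cV[R]_m) (k : 'I_m) : 0 <= xplus x k.
Proof. by rewrite /xplus le_max lexx orbT. Qed.

Lemma xminus_ge0 {R : realType} {m : nat} (x : 'cV[R]_m) (k : 'I_m) : 0 <= xminus x k.
Proof. by rewrite /xminus le_max lexx orbT. Qed.

Lemma sum_complex (R : rcfType) (I : finType) (a b : I -> R) :
  \sum_i (a i +i* b i) = (\sum_i a i) +i* (\sum_i b i).
Proof. by elim/big_rec3: _ => // i y1 y2 y3 _ ->. Qed.

Lemma realC_mul_complex (R : rcfType) (r a b : R) :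
  r%:C * (a +i* b) = (a * r) +i* (b * r).
Proof. by congr Complex => /=; ring. Qed.

Section DiagonalPauli.

Context {R : realType} {q n : nat}.

Lemma omegaX (N : nat) :
  omega R q ^+ N = cos (2 * pi * N%:R / q%:R) +i* sin (2 * pi * N%:R / q%:R).
Proof.
elim: N => [|N IH]; first by rewrite expr0 mulr0 mul0r cos0 sin0.
have -> : 2 * pi * N.+1%:R / q%:R = 2 * pi * N%:R / q%:R + 2 * pi / q%:R :> R.
  by rewrite -natr1; ring.
by rewrite exprSr IH /omega cosD sinD /=; congr Complex; ring.
Qed.

Lemma ZeigE (z s : qstring q n) :
  Zeig R z s = cos (2 * pi * (zdot z s)%:R / q%:R) +i* sin (2 * pi * (zdot z s)%:R / q%:R).
Proof. by rewrite /Zeig prodrXr omegaX. Qed.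

Lemma zdot_wt0 (z s : qstring q n) : wt z = 0%N -> zdot z s = 0%N.
Proof.
move/eqP; rewrite cards_eq0 => /eqP/setP wt0.
rewrite /zdot big1 // => i _.
by move: (wt0 i); rewrite !inE => /negbFE/eqP ->.
Qed.

Context {m : nat} {c : 'I_m -> qstring q n}.
Hypothesis c_inj : injective c.

Lemma logical_state_code (w : 'I_m -> R) (xt : R) (k : 'I_m) :
  logical_state c w xt (c k) = (Num.sqrt (w k) / Num.sqrt xt)%:C.
Proof.
rewrite /logical_state (bigD1 k) //= eqxx big1 ?addr0 // => j /negbTE.
by rewrite (inj_eq c_inj) => ->.
Qed.

Lemma expect_logical_state (w : 'I_m -> R) (xt : R) (z : qstring q n) :
  (forall k, 0 <= w k) -> 0 <= xt ->
  expect (logical_state c w xt) z = (xt^-1)%:C * \sum_k (w k)%:C * Zeig R z (c k).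
Proof.
move=> w_ge0 xt_ge0; rewrite /expect mulr_sumr.
under eq_bigr => s _ do rewrite [X in _ * X]/logical_state mulr_sumr.
rewrite exchange_big /=; apply: eq_bigr => k _.
rewrite (bigD1 (c k)) //= eqxx big1 ?addr0; last first.
  by move=> s /negbTE; rewrite eq_sym => ->; rewrite mulr0.
rewrite logical_state_code conj_Creal ?complex_real // mulrAC -rmorphM.
rewrite mulrACA -invfM -!expr2 !sqr_sqrtr //.
by rewrite mulrA -rmorphM [xt^-1 * _]mulrC.
Qed.

Context {dZ : nat}.

Lemma Amat_row_eq0 (r : Arow q n dZ) (x : 'cV[R]_m) :
  Amat R dZ c *m x = 0 -> \sum_k Aentry R c r k * x k 0 = 0.
Proof.
move=> Ax0; transitivity ((Amat R dZ c *m x) (enum_rank r) 0); last by rewrite Ax0 mxE.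
by rewrite mxE; apply: eq_bigr => k _; rewrite mxE enum_rankK.
Qed.

Lemma sum_Zeig_eq0 (x : 'cV[R]_m) (z : qstring q n) :
  Amat R dZ c *m x = 0 -> (wt z <= dZ - 1)%N ->
  \sum_k (x k 0)%:C * Zeig R z (c k) = 0.
Proof.
move=> Ax0 wt_z.
pose phase (k : 'I_m) : R := 2 * pi * (zdot z (c k))%:R / q%:R.
suff [cos_eq0 sin_eq0] :
    \sum_k cos (phase k) * x k 0 = 0 /\ \sum_k sin (phase k) * x k 0 = 0.
  have -> : \sum_k (x k 0)%:C * Zeig R z (c k) =
      (\sum_k cos (phase k) * x k 0) +i* (\sum_k sin (phase k) * x k 0).
    by rewrite -sum_complex; apply: eq_bigr => k _; rewrite ZeigE realC_mul_complex.
  by rewrite cos_eq0 sin_eq0.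
have [wt0 | wt_gt0] := posnP (wt z).
  have phase0 k : phase k = 0 by rewrite /phase zdot_wt0 // mulr0 mul0r.
  split; under eq_bigr do rewrite phase0 ?cos0 ?sin0.
    exact: (Amat_row_eq0 None).
  by rewrite big1 // => k _; rewrite mul0r.
have z_row : (1 <= wt z <= dZ - 1)%N by rewrite wt_gt0 wt_z.
pose zr : zrange q n dZ := exist _ z z_row.
split; first exact: (Amat_row_eq0 (Some (zr, false))).
exact: (Amat_row_eq0 (Some (zr, true))).
Qed.

End DiagonalPauli.

Theorem lemma1 (R : realType) (q n dZ m : nat) (c : 'I_m -> qstring q n)
  (x : 'cV[R]_m) :
  (2 <= q)%N -> (1 <= n)%N -> (1 <= dZ)%N ->
  injective c ->
  x != 0 ->
  Amat R dZ c *m x = 0 ->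
  let xtot := \sum_(k < m) xplus x k in
  let ket0 := logical_state c (xplus x) xtot in
  let ket1 := logical_state c (xminus x) xtot in
  forall z : qstring q n, (wt z <= dZ - 1)%N ->
    expect ket0 z = expect ket1 z.
Proof.
move=> _ _ _ c_inj _ Ax0 xtot ket0 ket1 z wt_z.
have [xplus_x_ge0 xminus_x_ge0] := (xplus_ge0 x, xminus_ge0 x).
have xtot_ge0 : 0 <= xtot by apply: sumr_ge0.
rewrite /ket0 /ket1 !expect_logical_state //.
apply/eqP; rewrite -subr_eq0 -mulrBr -sumrB.
under eq_bigr do rewrite -mulrBl -rmorphB xplus_sub_xminus.
by rewrite (sum_Zeig_eq0 x z Ax0 wt_z) mulr0.
Qed.
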